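(* Let $A\xrightarrow{f}B\xrightarrow{g}C$ be a composable pair of morphisms in a copy-discard category. (i) If $g\circ f$ and $g$ are both discardable, then $f$ is discardable. (ii) If $g\circ f$ and $g$ are both copyable and $g$ is split monic, then $f$ is copyable.
   Context: A copy-discard (CD) category is a symmetric monoidal category $(\mathcal{K},\otimes,I)$ in which every object $X$ is equipped with morphisms $\mathsf{copy}_X:X\to X\otimes X$ and $\mathsf{del}_X:X\to I$ making $X$ a commutative comonoid (counital, coassociative, cocommutative); morphisms need not preserve this structure. A morphism $f:X\to Y$ is copyable if $\mathsf{copy}_Y\circ f=(f\otimes f)\circ\mathsf{copy}_X$, and discardable if $\mathsf{del}_Y\circ f=\mathsf{del}_X$. A morphism is split monic if it has a left inverse. *)

Set Implicit Arguments.
Unset Strict Implicit.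

Record Category := {
  ob :> Type;
  hom : ob -> ob -> Type;
  idm : forall A, hom A A;
  comp : forall A B C, hom B C -> hom A B -> hom A C;
  comp_id_l : forall A B (f : hom A B), comp (idm B) f = f;
  comp_id_r : forall A B (f : hom A B), comp f (idm A) = f;
  comp_assoc : forall A B C D (h : hom C D) (g : hom B C) (f : hom A B),
      comp h (comp g f) = comp (comp h g) f
}.

Arguments idm {c} A.
Arguments comp {c A B C} g f.

Record SymMonCat := {
  cat :> Category;
  tens : cat -> cat -> cat;
  tensm : forall A B C D, hom A C -> hom B D -> hom (tens A B) (tens C D);
  unit : cat;
  tensm_id : forall A B, tensm (idm A) (idm B) = idm (tens A B);
  tensm_comp : forall A1 A2 A3 B1 B2 B3 (f1 : hom A1 A2) (g1 : hom A2 A3)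
      (f2 : hom B1 B2) (g2 : hom B2 B3),
      tensm (comp g1 f1) (comp g2 f2) = comp (tensm g1 g2) (tensm f1 f2);
  assoc : forall A B C, hom (tens (tens A B) C) (tens A (tens B C));
  assoc_inv : forall A B C, hom (tens A (tens B C)) (tens (tens A B) C);
  assoc_iso1 : forall A B C, comp (assoc_inv A B C) (assoc A B C) = idm _;
  assoc_iso2 : forall A B C, comp (assoc A B C) (assoc_inv A B C) = idm _;
  assoc_nat : forall A A' B B' C C' (f : hom A A') (g : hom B B') (h : hom C C'),
      comp (assoc A' B' C') (tensm (tensm f g) h)
      = comp (tensm f (tensm g h)) (assoc A B C);
  lunit : forall A, hom (tens unit A) A;
  lunit_inv : forall A, hom A (tens unit A);
  lunit_iso1 : forall A, comp (lunit_inv A) (lunit A) = idm _;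
  lunit_iso2 : forall A, comp (lunit A) (lunit_inv A) = idm _;
  lunit_nat : forall A B (f : hom A B),
      comp (lunit B) (tensm (idm unit) f) = comp f (lunit A);
  runit : forall A, hom (tens A unit) A;
  runit_inv : forall A, hom A (tens A unit);
  runit_iso1 : forall A, comp (runit_inv A) (runit A) = idm _;
  runit_iso2 : forall A, comp (runit A) (runit_inv A) = idm _;
  runit_nat : forall A B (f : hom A B),
      comp (runit B) (tensm f (idm unit)) = comp f (runit A);
  pentagon : forall A B C D,
      comp (assoc A B (tens C D)) (assoc (tens A B) C D)
      = comp (tensm (idm A) (assoc B C D))
          (comp (assoc A (tens B C) D) (tensm (assoc A B C) (idm D)));
  triangle : forall A B,
      comp (tensm (idm A) (lunit B)) (assoc A unit B)
      = tensm (runit A) (idm B);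
  braid : forall A B, hom (tens A B) (tens B A);
  braid_nat : forall A A' B B' (f : hom A A') (g : hom B B'),
      comp (braid A' B') (tensm f g) = comp (tensm g f) (braid A B);
  braid_invol : forall A B, comp (braid B A) (braid A B) = idm _;
  hexagon : forall A B C,
      comp (assoc B C A) (comp (braid A (tens B C)) (assoc A B C))
      = comp (tensm (idm B) (braid A C))
          (comp (assoc B A C) (tensm (braid A B) (idm C)))
}.

Arguments tens {s} A B.
Arguments tensm {s A B C D} f g.
Arguments unit {s}.
Arguments assoc {s} A B C.
Arguments lunit {s} A.
Arguments runit {s} A.
Arguments braid {s} A B.

(* Copy-discard category: every object is a commutative comonoid; morphisms
   need not preserve the structure. *)
Record CDCat := {
  smc :> SymMonCat;
  copy : forall X : smc, hom X (tens X X);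
  del : forall X : smc, hom X unit;
  copy_counit_l : forall X : smc,
      comp (lunit X) (comp (tensm (del X) (idm X)) (copy X)) = idm X;
  copy_counit_r : forall X : smc,
      comp (runit X) (comp (tensm (idm X) (del X)) (copy X)) = idm X;
  copy_coassoc : forall X : smc,
      comp (assoc X X X) (comp (tensm (copy X) (idm X)) (copy X))
      = comp (tensm (idm X) (copy X)) (copy X);
  copy_cocomm : forall X : smc, comp (braid X X) (copy X) = copy X
}.

Arguments copy {c} X.
Arguments del {c} X.

Definition copyable (K : CDCat) (X Y : K) (f : hom X Y) : Prop :=
  comp (copy Y) f = comp (tensm f f) (copy X).

Definition discardable (K : CDCat) (X Y : K) (f : hom X Y) : Prop :=
  comp (del Y) f = del X.

Definition split_monic (C : Category) (X Y : C) (f : hom X Y) : Prop :=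
  exists r : hom Y X, comp r f = idm X.


Set Implicit Arguments.
Unset Strict Implicit.

Lemma split_monic_cancel (C : Category) (X Y Z : C) (g : hom Y Z)
    (h k : hom X Y) :
  split_monic g -> comp g h = comp g k -> h = k.
Proof.
  intros [r Hr] Hgh.
  rewrite <- (comp_id_l h), <- (comp_id_l k), <- Hr, <- !comp_assoc, Hgh.
  reflexivity.
Qed.

Lemma split_monic_tensm (K : SymMonCat) (A B C D : K) (f : hom A C)
    (g : hom B D) :
  split_monic f -> split_monic g -> split_monic (tensm f g).
Proof.
  intros [r Hr] [s Hs].
  exists (tensm r s).
  rewrite <- tensm_comp, Hr, Hs.
  apply tensm_id.
Qed.

Lemma discardable_of_comp (K : CDCat) (A B C : K) (f : hom A B)
    (g : hom B C) :
  discardable (comp g f) -> discardable g -> discardable f.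
Proof.
  unfold discardable.
  intros Hgf Hg.
  rewrite <- Hg, <- comp_assoc.
  exact Hgf.
Qed.

Lemma copyable_of_comp (K : CDCat) (A B C : K) (f : hom A B)
    (g : hom B C) :
  copyable (comp g f) -> copyable g -> split_monic g -> copyable f.
Proof.
  unfold copyable.
  intros Hgf Hg Hsplit.
  (* Both sides become [copy C ∘ g ∘ f] after postcomposing with [g ⊗ g]. *)
  apply (split_monic_cancel (g := tensm g g)).
  - exact (split_monic_tensm Hsplit Hsplit).
  - rewrite comp_assoc, <- Hg, <- comp_assoc, Hgf.
    rewrite comp_assoc, <- tensm_comp.
    reflexivity.
Qed.

Theorem lemma3p18 (K : CDCat) (A B C : K) (f : hom A B) (g : hom B C) :
  (discardable (comp g f) -> discardable g -> discardable f) /\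
  (copyable (comp g f) -> copyable g -> split_monic g -> copyable f).
Proof.
  split.
  - apply discardable_of_comp.
  - apply copyable_of_comp.
Qed.
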